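(* Let $V_1,\dots,V_{15}$ be the orbits of $L$ on $V(G_{E_8})$. For each $i$, choose a vector $w_i\in\Psi_{E_8}$ with $v_{w_i}\in V_i$. For $x\in\Psi_{E_8}$ let $P_x=\frac{1}{\|x\|^2}xx^*\in M_8(\mathbb{C})$ be the rank-one projection onto $\mathbb{C}x$. For $v_y,v_z\in V_i$ choose $M_{yz}=M_1\otimes M_2\otimes M_3$ with $M_k\in\{I,X,Y,Z\}$ such that $M_{yz}y=\pm z$ (which exists since $v_y,v_z$ lie in the same $L$-orbit), and set $u^{(i)}_{v_yv_z}:=M_{yz}P_{w_i}M_{yz}^*=P_{M_{yz}w_i}$. Let $u$ be the $120\times120$ matrix with entries in $M_8(\mathbb{C})$ that is block diagonal with respect to the partition $V_1,\dots,V_{15}$, with diagonal blocks $u^{(i)}=(u^{(i)}_{v_yv_z})_{v_y,v_z\in V_i}$ and all other entries $0$. Then $u$ is a quantum permutation matrix.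
   Context: The $E_8$ root system $\Psi_{E_8}\subset\mathbb{R}^8$ consists of the 240 vectors $\pm e_i\pm e_j$ ($1\le i<j\le 8$) and all $x\in\{\pm1\}^8$ with $\prod_i x_i=1$. $G_{E_8}$ is the graph with vertices $v_x$, $x\in\Psi_{E_8}$, where $v_x=v_{-x}$, and $v_x\sim v_y$ iff $\langle x,y\rangle=0$. Let $I=\mathrm{diag}(1,1)$, $X=\begin{pmatrix}0&1\\1&0\end{pmatrix}$, $Z=\mathrm{diag}(1,-1)$, $Y=XZ$. For $M=M_1\otimes M_2\otimes M_3$ with $M_i\in\{I,X,Y,Z\}$, $\sigma_M:v_x\mapsto v_{Mx}$ is an automorphism of $G_{E_8}$ and $L=\{\sigma_M\}\cong\mathbb{Z}_2^6$; $L$ has 15 orbits on $V(G_{E_8})$, each of size 8. A quantum permutation matrix (magic unitary) over a unital $C^*$-algebra $\mathcal{A}$ is a matrix $u=(u_{ij})\in M_n(\mathcal{A})$ whose entries are projections ($u_{ij}=u_{ij}^*=u_{ij}^2$) with $\sum_k u_{ik}=1_{\mathcal{A}}=\sum_k u_{ki}$ for all $i$. Here $\mathcal{A}=M_8(\mathbb{C})$. *)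

From HB Require Import structures.
From mathcomp Require Import all_boot all_order all_algebra.
From mathcomp Require Import algC.
From mathcomp Require Import mxtens.
Set Implicit Arguments. Unset Strict Implicit. Unset Printing Implicit Defensive.
Import Order.TTheory GRing.Theory Num.Theory.
Local Open Scope ring_scope.

(* Vectors of R^8 (inside C^8), as column vectors over algC. *)
Definition vec := 'cV[algC]_8.
Definition e8 (i : 'I_8) : vec := delta_mx i 0.
Definition sgn (b : bool) : algC := (-1) ^+ b.

(* The E_8 root system: the vectors +-e_i +- e_j (i<j) and the x in {+-1}^8
   with product of coordinates equal to 1. *)
Definition Psi_E8 : seq vec :=
  [seq sgn st.1 *: e8 p.1 + sgn st.2 *: e8 p.2
     | p <- filter (fun p : 'I_8 * 'I_8 => (p.1 < p.2)%N) (enum {: 'I_8 * 'I_8}),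
       st <- enum {: bool * bool}]
  ++ map (fun f : {ffun 'I_8 -> bool} => \col_k sgn (f k))
       (filter (fun f : {ffun 'I_8 -> bool} => \prod_k sgn (f k) == 1)
          (enum {: {ffun 'I_8 -> bool}})).

Definition e8root := seq_sub Psi_E8.

(* the vertex v_x = v_{-x}, represented as the set {x, -x} *)
Definition vset (x : e8root) : {set e8root} :=
  [set y : e8root | (val y == val x) || (val y == - val x)].
Definition is_vertex (A : {set e8root}) : bool := [exists x : e8root, A == vset x].
Definition vertex := {A : {set e8root} | is_vertex A}.
Lemma vset_is_vertex (x : e8root) : is_vertex (vset x).
Proof. by apply/existsP; exists x. Qed.
Definition vtx (x : e8root) : vertex := exist _ (vset x) (vset_is_vertex x).

Inductive pauli := pI | pX | pY | pZ.
Definition matX : 'M[algC]_2 := \matrix_(i, j) (if i == j then 0 else 1).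
Definition matZ : 'M[algC]_2 :=
  \matrix_(i, j) (if i == j then (if i == 0 then 1 else -1) else 0).
Definition pmat (p : pauli) : 'M[algC]_2 :=
  match p with pI => 1%:M | pX => matX | pY => matX *m matZ | pZ => matZ end.

Definition Lmat (t : (pauli * pauli * pauli)%type) : 'M[algC]_8 :=
  pmat t.1.1 *t (pmat t.1.2 *t pmat t.2).

Definition Lmaps (t : (pauli * pauli * pauli)%type) (a b : vertex) : Prop :=
  exists y z : e8root, vtx y = a /\ vtx z = b /\
    (Lmat t *m val y = val z \/ Lmat t *m val y = - val z).

Definition same_orbit (a b : vertex) : Prop := exists t, Lmaps t a b.

Definition adj {m n} (A : 'M[algC]_(m, n)) : 'M[algC]_(n, m) := (map_mx Num.conj A)^T.

Definition Pproj (x : vec) : 'M[algC]_8 :=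
  (\sum_i `|x i 0| ^+ 2)^-1 *: (x *m adj x).

Definition is_projection (p : 'M[algC]_8) : Prop := adj p = p /\ p *m p = p.
Definition magic_unitary (I : finType) (u : I -> I -> 'M[algC]_8) : Prop :=
  (forall i j, is_projection (u i j)) /\
  (forall i, \sum_k u i k = 1%:M) /\ (forall i, \sum_k u k i = 1%:M).

From HB Require Import structures.
From mathcomp Require Import all_boot all_order all_algebra.
From mathcomp Require Import algC mxtens.
Import GRing.Theory Num.Theory.
Local Open Scope ring_scope.

(* The 64 matrices Lmat t are Kronecker products of real orthogonal 2 x 2
   Pauli matrices, so they are orthogonal, commute up to sign, square to +-1,
   and satisfy the completeness relation
   sum_t (Lmat t)_ik (Lmat t)_jl = 8 [i = j] [k = l]; hence
   sum_t Lmat t A (Lmat t)^* = 8 tr(A) I for every A.  Applied to A = P_y the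
   64 terms P_(Lmat t y) land on the vertices of the L-orbit of v_y, each
   exactly 8 times, so the projections of the vertices of an orbit sum to I.
   If Lmat t maps v_y to v_w, then, as Pauli matrices commute up to sign and
   P_(-x) = P_x, the row of u at v_y is the orbit family of projections
   conjugated by Lmat t, so it sums to I; columns are similar, using
   M^2 = +-I.  The facts about roots (L maps roots to roots, the fibre count 8)
   are finite checks, done by computation on an integer copy of Psi_E8. *)

(** * Adjoints and rank-one projections *)

Section Adjoint.
Variables m n p : nat.

Lemma adjM (A : 'M[algC]_(m, n)) (B : 'M[algC]_(n, p)) :
  adj (A *m B) = adj B *m adj A.
Proof. by rewrite /adj map_mxM trmx_mul. Qed.

Lemma adjK (A : 'M[algC]_(m, n)) : adj (adj A) = A.
Proof. by apply/matrixP=> i j; rewrite !mxE conjCK. Qed.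

Lemma adjZ (c : algC) (A : 'M[algC]_(m, n)) : adj (c *: A) = c^* *: adj A.
Proof. by apply/matrixP=> i j; rewrite !mxE rmorphM. Qed.

End Adjoint.

Definition sqnorm (x : vec) : algC := \sum_i `|x i 0| ^+ 2.

Lemma adj_mul_col (x : vec) : adj x *m x = (sqnorm x)%:M.
Proof.
apply/matrixP=> i j; rewrite !ord1 !mxE /=; apply: eq_bigr => k _.
by rewrite !mxE normCK mulrC.
Qed.

Lemma sqnorm_eq0 (x : vec) : (sqnorm x == 0) = (x == 0).
Proof.
apply/idP/eqP=> [x0|->]; last by rewrite /sqnorm big1 // => i _; rewrite mxE normr0 expr0n.
apply/matrixP=> i j; rewrite ord1 mxE; apply/eqP; rewrite -normr_eq0 -sqrf_eq0.
apply/eqP; apply: (psumr_eq0P _ (eqP x0)) => // k _; exact: exprn_ge0.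
Qed.

Lemma sqnorm_unitary (A : 'M[algC]_8) (x : vec) :
  adj A *m A = 1%:M -> sqnorm (A *m x) = sqnorm x.
Proof.
move=> uA; have := adj_mul_col (A *m x); rewrite adjM mulmxA -(mulmxA (adj x)) uA mulmx1.
by rewrite adj_mul_col => /matrixP/(_ 0 0); rewrite !mxE /= !mulr1n => ->.
Qed.

Lemma PprojE (x : vec) : Pproj x = (sqnorm x)^-1 *: (x *m adj x).
Proof. by []. Qed.

Lemma PprojZ (c : algC) (x : vec) : c != 0 -> Pproj (c *: x) = Pproj x.
Proof.
move=> c0; rewrite !PprojE adjZ -scalemxAl -scalemxAr scalerA.
have -> : sqnorm (c *: x) = `|c| ^+ 2 * sqnorm x.
  rewrite /sqnorm mulr_sumr; apply: eq_bigr => i _.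
  by rewrite mxE normrM exprMn.
by rewrite normCK scalerA invfM -mulrA mulrAC mulVf ?mul1r // mulf_neq0 ?conjC_eq0.
Qed.

Lemma PprojN (x : vec) : Pproj (- x) = Pproj x.
Proof. by rewrite -scaleN1r PprojZ ?oppr_eq0 ?oner_eq0. Qed.

Lemma Pproj_unitary (A : 'M[algC]_8) (x : vec) :
  adj A *m A = 1%:M -> Pproj (A *m x) = A *m Pproj x *m adj A.
Proof.
move=> uA; rewrite !PprojE sqnorm_unitary // adjM.
by rewrite -scalemxAr -scalemxAl !mulmxA.
Qed.

Lemma Pproj_is_projection (x : vec) : x != 0 -> is_projection (Pproj x).
Proof.
rewrite -sqnorm_eq0 => x0; split.
  rewrite PprojE adjZ adjM adjK fmorphV; congr (_^-1 *: _).
  rewrite rmorph_sum; apply: eq_bigr => i _.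
  by rewrite rmorphXn; congr (_ ^+ 2); exact: conj_normC.
rewrite PprojE -scalemxAl -scalemxAr scalerA mulmxA -(mulmxA x) adj_mul_col.
by rewrite mul_mx_scalar -scalemxAl scalerA -mulrA mulVf ?mulr1.
Qed.

Lemma mxtrace_Pproj (x : vec) : x != 0 -> \tr (Pproj x) = 1.
Proof.
rewrite -sqnorm_eq0 => x0.
by rewrite PprojE mxtraceZ mxtrace_mulC adj_mul_col mxtrace_scalar mulr1n mulVf.
Qed.

Lemma twirl_completeness n (T : finType) (U : T -> 'M[algC]_n) (c : algC) :
    (forall i j k l, \sum_t U t i k * (U t j l)^* = c * ((i == j) && (k == l))%:R) ->
  forall A, \sum_t U t *m A *m adj (U t) = (c * \tr A) *: 1%:M.
Proof.
move=> complete A; apply/matrixP=> i j; rewrite summxE.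
transitivity (\sum_k \sum_l A k l * \sum_t U t i k * (U t j l)^*).
  under eq_bigr => t _ do rewrite mxE; rewrite exchange_big /=.
  under eq_bigr => l _ do under eq_bigr => t _ do rewrite !mxE big_distrl /=.
  under eq_bigr => l _ do rewrite exchange_big /=.
  rewrite exchange_big /=; apply: eq_bigr => k _.
  apply: eq_bigr => l _; rewrite mulr_sumr; apply: eq_bigr => t _.
  by rewrite mulrCA mulrA.
under eq_bigr => k _ do under eq_bigr => l _ do rewrite complete.
rewrite !mxE /mxtrace mulr_sumr mulr_suml.
case: (i == j) => /=; last first.
  rewrite [RHS]big1 => [|k _]; last by rewrite mulr0.
  by rewrite big1 // => k _; rewrite big1 // => l _; rewrite !mulr0.
apply: eq_bigr => k _; rewrite (bigD1 k) //= big1 => [|l /negbTE lk].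
  by rewrite eqxx addr0 !mulr1 mulrC.
by rewrite eq_sym lk !mulr0.
Qed.

Definition eq_pm {m n} (A B : 'M[algC]_(m, n)) : bool := (A == B) || (A == - B).

Lemma eq_pmP {m n} {A B : 'M[algC]_(m, n)} : reflect (A = B \/ A = - B) (eq_pm A B).
Proof. by apply: (iffP orP) => -[] E; [left | right | left | right]; apply/eqP. Qed.

Lemma eq_pm_refl {m n} (A : 'M[algC]_(m, n)) : eq_pm A A.
Proof. by rewrite /eq_pm eqxx. Qed.

Lemma eq_pm_sym {m n} {A B : 'M[algC]_(m, n)} : eq_pm A B -> eq_pm B A.
Proof. by case/eq_pmP=> ->; rewrite /eq_pm ?opprK eqxx ?orbT. Qed.

Lemma eq_pm_trans {m n} {A B C : 'M[algC]_(m, n)} : eq_pm A B -> eq_pm B C -> eq_pm A C.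
Proof. by do 2!case/eq_pmP=> ->; rewrite /eq_pm ?opprK eqxx ?orbT. Qed.

Lemma eq_pm_mull {m n p} (C : 'M[algC]_(m, n)) {A B : 'M[algC]_(n, p)} :
  eq_pm A B -> eq_pm (C *m A) (C *m B).
Proof. by case/eq_pmP=> ->; rewrite /eq_pm ?mulmxN eqxx ?orbT. Qed.

Lemma eq_pm_mulr {m n p} (C : 'M[algC]_(n, p)) {A B : 'M[algC]_(m, n)} :
  eq_pm A B -> eq_pm (A *m C) (B *m C).
Proof. by case/eq_pmP=> ->; rewrite /eq_pm ?mulNmx eqxx ?orbT. Qed.

Lemma Pproj_eq_pm {x y : vec} : eq_pm x y -> Pproj x = Pproj y.
Proof. by case/eq_pmP=> ->; rewrite ?PprojN. Qed.

(** * Pauli matrices *)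

Definition sumZ {T} (s : seq T) (f : T -> int) : int := foldr (fun x a => f x + a) 0 s.

Lemma sumZE T (s : seq T) (f : T -> int) :
  (sumZ s f)%:~R = \sum_(x <- s) (f x)%:~R :> algC.
Proof. by elim: s => [|x s IHs]; rewrite ?big_nil ?big_cons // -IHs -rmorphD. Qed.

Section IntegerMatrices.

Variable n : nat.
Implicit Types A B : nat -> nat -> int.

Definition all_lt (P : pred nat) : bool := all P (iota 0 n).

Lemma all_ltP (P : pred nat) : all_lt P -> forall i : 'I_n, P i.
Proof. by move=> /allP Pn i; apply: Pn; rewrite mem_iota ltn_ord. Qed.

Lemma sum_ordZ (f : nat -> int) : \sum_(k < n) (f k)%:~R = (sumZ (iota 0 n) f)%:~R :> algC.
Proof. by rewrite sumZE -(big_mkord (fun _ => true) (fun k => (f k)%:~R)) /index_iota subn0. Qed.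

Definition intmx A : 'M[algC]_n := \matrix_(i, j) (A i j)%:~R.
Definition mulZ A B i j : int := sumZ (iota 0 n) (fun k => A i k * B k j).
Definition eqZ A B : bool := all_lt (fun i => all_lt (fun j => A i j == B i j)).
Definition eq_pmZ A B : bool := eqZ A B || eqZ A (fun i j => - B i j).

Lemma intmxE A i j : intmx A i j = (A i j)%:~R.
Proof. by rewrite mxE. Qed.

Lemma intmx_mul A B : intmx A *m intmx B = intmx (mulZ A B).
Proof.
apply/matrixP=> i j; rewrite !mxE -sum_ordZ.
by apply: eq_bigr => k _; rewrite !mxE rmorphM.
Qed.

Lemma adj_intmx A : adj (intmx A) = intmx (fun i j => A j i).
Proof. by apply/matrixP=> i j; rewrite !mxE rmorph_int. Qed.

Lemma intmx1 : intmx (fun i j => (i == j)%:Z) = 1%:M.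
Proof. by apply/matrixP=> i j; rewrite !mxE -val_eqE; case: eqP. Qed.

Lemma eqZ_intmx A B : eqZ A B -> intmx A = intmx B.
Proof.
by move=> /all_ltP AB; apply/matrixP=> i j; rewrite !mxE (eqP (all_ltP _ (AB i) j)).
Qed.

Lemma eq_pmZ_intmx A B : eq_pmZ A B -> eq_pm (intmx A) (intmx B).
Proof.
case/orP=> /eqZ_intmx ->; first exact: eq_pm_refl.
have -> : intmx (fun i j => - B i j) = - intmx B.
  by apply/matrixP=> i j; rewrite !mxE rmorphN.
by rewrite /eq_pm eqxx orbT.
Qed.

End IntegerMatrices.

Definition pauli_bits (p : pauli) : bool * bool :=
  match p with pI => (false, false) | pX => (true, false)
             | pY => (true, true) | pZ => (false, true) end.
Definition bits_pauli (b : bool * bool) : pauli :=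
  match b with (false, false) => pI | (true, false) => pX
             | (true, true) => pY | (false, true) => pZ end.
Lemma pauli_bitsK : cancel pauli_bits bits_pauli. Proof. by case. Qed.
HB.instance Definition _ := Finite.copy pauli (can_type pauli_bitsK).

Definition tcode := (pauli * pauli * pauli)%type.
Definition paulis := [:: pI; pX; pY; pZ].
Definition tcodes : seq tcode :=
  [seq (pq, r) | pq <- [seq (p, q) | p <- paulis, q <- paulis], r <- paulis].

Lemma mem_tcodes t : t \in tcodes.
Proof. by case: t => [[[] []] []]; vm_compute. Qed.

Lemma perm_tcodes : perm_eq (enum {: tcode}) tcodes.
Proof.
apply: uniq_perm; [exact: enum_uniq | by vm_compute | move=> t].
by rewrite mem_enum mem_tcodes.
Qed.

Lemma big_tcode (F : tcode -> algC) : \sum_t F t = \sum_(t <- tcodes) F t.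
Proof. by rewrite -(perm_big _ perm_tcodes) big_enum. Qed.

Lemma card_tcode (P : pred tcode) : #|P| = count P tcodes.
Proof. by rewrite cardE /enum_mem size_filter -enumT (permP perm_tcodes). Qed.

Definition pauliZ (p : pauli) (a b : nat) : int :=
  match p with
  | pI => (a == b)%:Z
  | pX => (a != b)%:Z
  | pY => if a == b then 0 else if b == 0 then 1 else -1
  | pZ => if a == b then (if a == 0 then 1 else -1) else 0
  end.

Lemma pmat_intmx p : pmat p = intmx 2 (pauliZ p).
Proof.
apply/matrixP=> -[[|[]] //= ?] [[|[]] //= ?]; case: p;
  by rewrite /= !mxE //= big_ord_recr big_ord1 /= !mxE /= ?(mul0r, mulr0, mul1r, addr0, add0r).
Qed.

Lemma pmat_unitary p : adj (pmat p) *m pmat p = 1%:M.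
Proof.
rewrite pmat_intmx adj_intmx intmx_mul -intmx1; apply: eqZ_intmx.
by case: p; vm_compute.
Qed.

Lemma pmat_comm p q : eq_pm (pmat p *m pmat q) (pmat q *m pmat p).
Proof.
rewrite !pmat_intmx !intmx_mul; apply: eq_pmZ_intmx.
by case: p; case: q; vm_compute.
Qed.

Lemma pmat_sqr p : eq_pm (pmat p *m pmat p) 1%:M.
Proof.
rewrite pmat_intmx intmx_mul -intmx1; apply: eq_pmZ_intmx.
by case: p; vm_compute.
Qed.

Section TensorSign.
Context {m n p q : nat}.

Lemma adj_tens (A : 'M[algC]_(m, n)) (B : 'M[algC]_(p, q)) :
  adj (A *t B) = adj A *t adj B.
Proof. by rewrite /adj map_mxT trmx_tens. Qed.

Lemma tensNmx (A : 'M[algC]_(m, n)) (B : 'M[algC]_(p, q)) : (- A) *t B = - (A *t B).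
Proof. by apply/matrixP=> i j; rewrite !mxE mulNr. Qed.

Lemma tensmxN (A : 'M[algC]_(m, n)) (B : 'M[algC]_(p, q)) : A *t (- B) = - (A *t B).
Proof. by apply/matrixP=> i j; rewrite !mxE mulrN. Qed.

Lemma eq_pm_tens (A A' : 'M[algC]_(m, n)) (B B' : 'M[algC]_(p, q)) :
  eq_pm A A' -> eq_pm B B' -> eq_pm (A *t B) (A' *t B').
Proof.
case/eq_pmP=> -> /eq_pmP[]->;
  by rewrite /eq_pm ?tensNmx ?tensmxN ?opprK eqxx ?orbT.
Qed.

End TensorSign.

Lemma tens1mx m n : (1%:M : 'M[algC]_m) *t (1%:M : 'M[algC]_n) = 1%:M.
Proof.
apply/matrixP=> i j; case: (mxtens_indexP i) => i1 i2; case: (mxtens_indexP j) => j1 j2.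
rewrite tensmxE !mxE (inj_eq (can_inj (@mxtens_indexK m n))) xpair_eqE.
by rewrite -natrM mulnb.
Qed.

Section TensorProducts.
Context {m n : nat} {A C : 'M[algC]_m} {B D : 'M[algC]_n}.

Lemma tens_unitary :
  adj A *m A = 1%:M -> adj B *m B = 1%:M -> adj (A *t B) *m (A *t B) = 1%:M.
Proof. by move=> uA uB; rewrite adj_tens tensmx_mul uA uB tens1mx. Qed.

Lemma tens_comm_pm :
    eq_pm (A *m C) (C *m A) -> eq_pm (B *m D) (D *m B) ->
  eq_pm ((A *t B) *m (C *t D)) ((C *t D) *m (A *t B)).
Proof. by rewrite !tensmx_mul; apply: eq_pm_tens. Qed.

Lemma tens_sqr_pm :
  eq_pm (A *m A) 1%:M -> eq_pm (B *m B) 1%:M -> eq_pm ((A *t B) *m (A *t B)) 1%:M.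
Proof. by rewrite tensmx_mul -tens1mx; apply: eq_pm_tens. Qed.

End TensorProducts.

Lemma Lmat_unitary t : adj (Lmat t) *m Lmat t = 1%:M.
Proof. exact (tens_unitary (pmat_unitary _) (tens_unitary (pmat_unitary _) (pmat_unitary _))). Qed.

Lemma Lmat_unitaryV t : Lmat t *m adj (Lmat t) = 1%:M.
Proof. exact/mulmx1C/Lmat_unitary. Qed.

Lemma Lmat_comm s t : eq_pm (Lmat s *m Lmat t) (Lmat t *m Lmat s).
Proof.
exact (tens_comm_pm (pmat_comm _ _) (tens_comm_pm (pmat_comm _ _) (pmat_comm _ _))).
Qed.

Lemma Lmat_sqr t : eq_pm (Lmat t *m Lmat t) 1%:M.
Proof. exact (tens_sqr_pm (pmat_sqr _) (tens_sqr_pm (pmat_sqr _) (pmat_sqr _))). Qed.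

Lemma Lmat_pm_sym t (x y : vec) : eq_pm (Lmat t *m x) y -> eq_pm (Lmat t *m y) x.
Proof.
move=> txy; apply: eq_pm_trans (eq_pm_mull _ (eq_pm_sym txy)) _.
by rewrite mulmxA -[x in eq_pm _ x]mul1mx; apply: eq_pm_mulr; apply: Lmat_sqr.
Qed.

Lemma Pproj_Lmat_swap s {t} {x w : vec} :
  eq_pm (Lmat t *m x) w -> Pproj (Lmat s *m w) = Lmat t *m Pproj (Lmat s *m x) *m adj (Lmat t).
Proof.
move=> txw; rewrite -Pproj_unitary ?Lmat_unitary //; apply: Pproj_eq_pm.
apply: eq_pm_trans (eq_pm_mull (Lmat s) (eq_pm_sym txw)) _; rewrite !mulmxA.
exact: eq_pm_mulr (Lmat_comm s t).
Qed.

(* Indices follow mxtens: i = 4 i1 + 2 i2 + i3 with i1, i2, i3 < 2. *)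
Definition LmatZ (t : tcode) (i k : nat) : int :=
  pauliZ t.1.1 (i %/ 4) (k %/ 4) *
  (pauliZ t.1.2 (i %% 4 %/ 2) (k %% 4 %/ 2) * pauliZ t.2 (i %% 4 %% 2) (k %% 4 %% 2)).

Lemma Lmat_intmx t : Lmat t = intmx 8 (LmatZ t).
Proof.
apply/matrixP=> i k; rewrite /Lmat /tensmx !mxE !pmat_intmx.
by rewrite !mxE !rmorphM.
Qed.

Lemma Lmat_completeness i j k l :
  \sum_t Lmat t i k * (Lmat t j l)^* = 8 * ((i == j) && (k == l))%:R.
Proof.
under eq_bigr => t _ do rewrite Lmat_intmx !intmxE rmorph_int -intrM.
rewrite big_tcode -sumZE.
have -> : 8 * ((i == j) && (k == l))%:R = (8 * ((i == j) && (k == l))%:Z)%:~R :> algC.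
  by rewrite rmorphM /= rmorph_nat.
congr (_%:~R); apply/eqP; rewrite -!val_eqE /=.
have /all_ltP/(_ i)/all_ltP/(_ j)/all_ltP/(_ k)/all_ltP/(_ l) // : all_lt 8 (fun i =>
  all_lt 8 (fun j => all_lt 8 (fun k => all_lt 8 (fun l =>
    sumZ tcodes (fun t => LmatZ t i k * LmatZ t j l) == 8 * ((i == j) && (k == l))%:Z)))).
  by vm_compute.
Qed.

Lemma twirl_Lmat (A : 'M[algC]_8) :
  \sum_t Lmat t *m A *m adj (Lmat t) = (8 * \tr A) *: 1%:M.
Proof. exact: twirl_completeness Lmat_completeness A. Qed.

(** * The roots of E_8 as integer vectors *)

Definition vecZ (l : seq int) : vec := \col_k (nth 0 l k)%:~R.

Definition actZ (t : tcode) (l : seq int) : seq int :=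
  mkseq (fun i => sumZ (iota 0 8) (fun k => LmatZ t i k * nth 0 l k)) 8.

Lemma Lmat_vecZ t l : Lmat t *m vecZ l = vecZ (actZ t l).
Proof.
apply/matrixP=> i c; rewrite ord1 !mxE nth_mkseq // -sum_ordZ Lmat_intmx.
by apply: eq_bigr => k _; rewrite intmxE mxE intrM.
Qed.

Lemma vecZ_inj l1 l2 : size l1 = 8 -> size l2 = 8 -> vecZ l1 = vecZ l2 -> l1 = l2.
Proof.
move=> s1 s2 /matrixP eq12; apply: (@eq_from_nth _ 0); rewrite s1 ?s2 // => i i8.
by have := eq12 (Ordinal i8) 0; rewrite !mxE => /intr_inj.
Qed.

Lemma oppr_vecZ l : - vecZ l = vecZ (map -%R l).
Proof.
apply/matrixP=> i c; rewrite !mxE; have [il | li] := ltnP i (size l).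
  by rewrite (nth_map 0) // rmorphN.
by rewrite !nth_default ?size_map // oppr0.
Qed.

Definition eq_pm_seq (a b : seq int) : bool := (a == b) || (a == map -%R b).

Lemma eq_pm_vecZ l1 l2 : size l1 = 8 -> size l2 = 8 ->
  eq_pm (vecZ l1) (vecZ l2) = eq_pm_seq l1 l2.
Proof.
move=> s1 s2; rewrite /eq_pm oppr_vecZ.
have s2' : size (map -%R l2) = 8 by rewrite size_map.
by congr (_ || _); apply/eqP/eqP => [|->] //; apply: vecZ_inj.
Qed.

Definition sgnZ (b : bool) : int := (-1) ^+ b.
Definition signs : seq int := [:: 1; -1].

Lemma sgnZE b : (sgnZ b)%:~R = sgn b.
Proof. by rewrite /sgnZ /sgn rmorphXn rmorphN1. Qed.

Lemma mem_sgnZ b : sgnZ b \in signs.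
Proof. by case: b. Qed.

Lemma signsP a : a \in signs -> a = sgnZ (a == -1).
Proof. by rewrite !inE => /orP[]/eqP->. Qed.

Definition mk2 (i j : nat) (a b : int) : seq int :=
  mkseq (fun k => (if k == i then a else 0) + (if k == j then b else 0)) 8.

Lemma vecZ_mk2 (i j : 'I_8) a b : vecZ (mk2 i j a b) = a%:~R *: e8 i + b%:~R *: e8 j.
Proof.
apply/matrixP=> k c; rewrite ord1 !mxE nth_mkseq //= intrD !val_eqE andbT.
by case: (k == i); case: (k == j); rewrite ?mulr1 ?mulr0.
Qed.

Fixpoint sign_vectors n : seq (seq int) :=
  if n is n'.+1 then [seq a :: l | a <- signs, l <- sign_vectors n'] else [:: [::]].

Lemma mem_sign_vectors n l :
  (l \in sign_vectors n) = (size l == n) && all (mem signs) l.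
Proof.
elim: n l => [|n IHn] l; first by case: l.
apply/allpairsP/idP => [[[b r] /= [bs rs ->]] | ].
  by rewrite /= eqSS bs -IHn.
case: l => [|a l] //=; rewrite eqSS => /andP[sl /andP[al rl]].
by exists (a, l); rewrite /= IHn sl rl.
Qed.

Definition prodZ (l : seq int) : int := foldr *%R 1 l.

Lemma prodZE l : (prodZ l)%:~R = \prod_(a <- l) a%:~R :> algC.
Proof. by elim: l => [|a l IHl]; rewrite ?big_nil ?big_cons // -IHl -intrM. Qed.

Definition pairs8 : seq (nat * nat) :=
  [seq ij <- [seq (i, j) | i <- iota 0 8, j <- iota 0 8] | (ij.1 < ij.2)%N].

Definition PsiZ : seq (seq int) :=
  [seq mk2 ij.1 ij.2 ab.1 ab.2 | ij <- pairs8, ab <- [seq (a, b) | a <- signs, b <- signs]]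
  ++ [seq l <- sign_vectors 8 | prodZ l == 1].

Lemma vecZ_PsiZ l : l \in PsiZ -> vecZ l \in Psi_E8.
Proof.
rewrite mem_cat => /orP[/allpairsP[[ij ab] [+ + ->]] | ].
  rewrite mem_filter => /andP[lt_ij /allpairsP[[i j] [+ + eij]]].
  rewrite !mem_iota => i8 j8 /allpairsP[[a b] [/signsP sa /signsP sb eab]].
  rewrite {}eij {}eab /= in i8 j8 lt_ij sa sb *.
  rewrite -[i]/(nat_of_ord (Ordinal i8)) -[j]/(nat_of_ord (Ordinal j8)) vecZ_mk2.
  rewrite sa sb !sgnZE mem_cat; apply/orP; left; apply/allpairsP.
  by exists ((Ordinal i8, Ordinal j8), (a == -1, b == -1)); rewrite mem_filter !mem_enum andbT.
rewrite mem_filter mem_sign_vectors => /andP[/eqP prod1 /andP[/eqP size8 /allP lS]].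
pose f := [ffun k : 'I_8 => nth 0 l k == -1].
have lf (k : 'I_8) : nth 0 l k = sgnZ (f k).
  by rewrite ffunE; apply/signsP/lS/mem_nth; rewrite size8.
have -> : vecZ l = \col_k sgn (f k) by apply/matrixP=> k c; rewrite !mxE lf sgnZE.
rewrite mem_cat; apply/orP; right; apply/map_f; rewrite mem_filter mem_enum andbT.
have -> : \prod_k sgn (f k) = \prod_(a <- l) a%:~R.
  by rewrite [RHS](big_nth 0) size8 big_mkord; apply: eq_bigr => k _; rewrite lf sgnZE.
by rewrite -prodZE prod1.
Qed.

Lemma Psi_E8_PsiZ x : x \in Psi_E8 -> exists2 l, l \in PsiZ & x = vecZ l.
Proof.
rewrite mem_cat => /orP[/allpairsP[[[i j] [b1 b2]] /= [] + _ ->] | /mapP[f + ->]].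
  rewrite mem_filter => /andP[/= ij _].
  exists (mk2 i j (sgnZ b1) (sgnZ b2)); last by rewrite vecZ_mk2 !sgnZE.
  rewrite mem_cat; apply/orP; left; apply/allpairsP; exists ((val i, val j), (sgnZ b1, sgnZ b2)).
  split=> //; last by apply/allpairsP; exists (sgnZ b1, sgnZ b2); rewrite !mem_sgnZ.
  by rewrite mem_filter ij; apply/allpairsP; exists (val i, val j); rewrite !mem_iota !ltn_ord.
rewrite mem_filter => /andP[/eqP prod1 _].
pose l := [seq sgnZ (f k) | k <- enum 'I_8].
have lf (k : 'I_8) : nth 0 l k = sgnZ (f k) by rewrite (nth_map k) ?nth_ord_enum ?size_enum_ord.
exists l; last by apply/matrixP=> k c; rewrite !mxE lf sgnZE.
rewrite mem_cat; apply/orP; right; rewrite mem_filter mem_sign_vectors size_map size_enum_ord.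
rewrite andbC /=; apply/andP; split; first by apply/allP=> _ /mapP[k _ ->]; apply: mem_sgnZ.
apply/eqP/(@intr_inj algC); rewrite prodZE rmorph1 big_map big_enum -[RHS]prod1.
by apply: eq_bigr => k _; rewrite sgnZE.
Qed.

Definition orbitZ (l : seq int) : seq (seq int) := [seq actZ t l | t <- tcodes].

Lemma PsiZ_size_neq0 : all (fun l => (size l == 8) && (l != nseq 8 0)) PsiZ.
Proof. by vm_compute. Qed.

Lemma PsiZ_orbit_closed : all (fun l => all (mem PsiZ) (orbitZ l)) PsiZ.
Proof. by vm_compute. Qed.

(* The [let] makes vm_compute evaluate each orbit only once. *)
Lemma PsiZ_orbit_fibers :
  all (fun l => let V := orbitZ l in all (fun v => count (eq_pm_seq^~ v) V == 8) V) PsiZ.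
Proof. by vm_compute. Qed.

Lemma Psi_E8_PsiZ_spec x :
  x \in Psi_E8 -> exists l, [/\ l \in PsiZ, size l = 8, l != nseq 8 0 & x = vecZ l].
Proof.
case/Psi_E8_PsiZ=> l lPsi ->; exists l.
by have /andP[/eqP-> ->] := allP PsiZ_size_neq0 l lPsi.
Qed.

Lemma root_neq0 {x : vec} : x \in Psi_E8 -> x != 0.
Proof.
case/Psi_E8_PsiZ_spec=> l [_ size8 l0 ->]; apply: contra l0 => /eqP vecZ0.
have vecZ_nseq0 : vecZ (nseq 8 0) = 0 by apply/matrixP=> i c; rewrite !mxE nth_nseq ltn_ord.
by apply/eqP/vecZ_inj; rewrite ?size_nseq // vecZ0 vecZ_nseq0.
Qed.

Lemma Lmat_root t {x : vec} : x \in Psi_E8 -> Lmat t *m x \in Psi_E8.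
Proof.
case/Psi_E8_PsiZ_spec=> l [lPsi _ _ ->]; rewrite Lmat_vecZ; apply: vecZ_PsiZ.
exact: (allP (allP PsiZ_orbit_closed l lPsi)) (map_f (actZ^~ l) (mem_tcodes t)).
Qed.

Lemma card_Lmat_fiber t0 {x : vec} : x \in Psi_E8 ->
  #|[pred t | eq_pm (Lmat t *m x) (Lmat t0 *m x)]| = 8.
Proof.
case/Psi_E8_PsiZ_spec=> l [lPsi _ _ ->]; rewrite card_tcode.
have /allP/(_ _ (map_f (actZ^~ l) (mem_tcodes t0)))/eqP := allP PsiZ_orbit_fibers l lPsi.
rewrite count_map => <-; apply: eq_count => t /=.
by rewrite !Lmat_vecZ eq_pm_vecZ ?size_mkseq.
Qed.

(** * Orbits of L on the vertices *)

Lemma vtx_eq (y z : e8root) : (vtx y == vtx z) = eq_pm (val y) (val z).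
Proof.
apply/eqP/idP => [/(congr1 val) /= yz | /eq_pmP yz]; last first.
  apply: val_inj; apply/setP=> x; rewrite !inE.
  by case: yz => ->; rewrite ?opprK // orbC.
have : z \in vset y by rewrite yz inE eqxx.
by rewrite inE => /orP[]/eqP->; rewrite /eq_pm ?opprK eqxx ?orbT.
Qed.

Lemma vertex_rep (a : vertex) : exists y, a = vtx y.
Proof. by case: a => A Av; have /existsP[y /eqP eA] := Av; exists y; apply: val_inj. Qed.

Lemma Lmaps_vtx t (y z : e8root) :
  Lmaps t (vtx y) (vtx z) <-> eq_pm (Lmat t *m val y) (val z).
Proof.
split=> [[y' [z' [/eqP yy' [/eqP zz' /eq_pmP tyz]]]] | tyz]; last first.
  by exists y, z; split=> //; split=> //; apply/eq_pmP.
rewrite !vtx_eq in yy' zz'.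
apply: eq_pm_trans (eq_pm_mull _ (eq_pm_sym yy')) _.
exact: eq_pm_trans tyz zz'.
Qed.

Lemma same_orbit_sym a b : same_orbit a b -> same_orbit b a.
Proof.
have [[y ->] [z ->]] := (vertex_rep a, vertex_rep b).
by case=> t /Lmaps_vtx /Lmat_pm_sym tzy; exists t; apply/Lmaps_vtx.
Qed.

Definition same_orbitb (a b : vertex) : bool :=
  [exists t, exists y, exists z,
     [&& vtx y == a, vtx z == b & eq_pm (Lmat t *m val y) (val z)]].

Lemma same_orbitP a b : reflect (same_orbit a b) (same_orbitb a b).
Proof.
apply: (iffP existsP) => [[t /existsP[y /existsP[z /and3P[/eqP<- /eqP<- tyz]]]] | [t]].
  by exists t; apply/Lmaps_vtx.
have [[y ->] [z ->]] := (vertex_rep a, vertex_rep b).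
by move/Lmaps_vtx=> tyz; exists t; apply/existsP; exists y; apply/existsP; exists z; rewrite !eqxx.
Qed.

Definition rootL t (y : e8root) : e8root := SeqSub (Lmat_root t (valP y)).

Lemma same_orbit_rootL y b : reflect (exists t, b = vtx (rootL t y)) (same_orbitb (vtx y) b).
Proof.
apply: (iffP (same_orbitP _ _)) => [| [t ->]]; last by exists t; apply/Lmaps_vtx/eq_pm_refl.
have [z ->] := vertex_rep b; case=> t /Lmaps_vtx tyz.
by exists t; apply/eqP; rewrite vtx_eq; apply: eq_pm_sym.
Qed.

Definition vproj (b : vertex) : 'M[algC]_8 :=
  if [pick x in val b] is Some x then Pproj (val x) else 0.

Lemma vproj_vtx y : vproj (vtx y) = Pproj (val y).
Proof.
rewrite /vproj; case: pickP => [x | /(_ y)]; last by rewrite /= inE eqxx.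
by rewrite /= inE => /orP[]/eqP->; rewrite ?PprojN.
Qed.

Lemma card_vtx_fiber y b :
  #|[pred t | vtx (rootL t y) == b]| = if same_orbitb (vtx y) b then 8 else 0.
Proof.
case: (same_orbit_rootL y b) => [[t0 ->] | notin]; last first.
  by apply: eq_card0 => t; rewrite !inE; apply/negbTE/eqP => tb; apply: notin; exists t.
rewrite -(card_Lmat_fiber t0 (valP y)); apply: eq_card => t.
by rewrite !inE vtx_eq.
Qed.

Lemma sum_vproj_orbit y : \sum_(b | same_orbitb (vtx y) b) vproj b = 1%:M.
Proof.
have fiber b : \sum_(t | vtx (rootL t y) == b) vproj (vtx (rootL t y))
               = if same_orbitb (vtx y) b then vproj b *+ 8 else 0.
  transitivity (\sum_(t in [pred t | vtx (rootL t y) == b]) vproj b).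
    by apply: eq_big => // t /eqP->.
  by rewrite sumr_const card_vtx_fiber; case: ifP.
have := twirl_Lmat (Pproj (val y)).
rewrite mxtrace_Pproj ?root_neq0 ?(valP y) // mulr1.
under eq_bigr => t _ do rewrite -Pproj_unitary ?Lmat_unitary // -[Lmat t *m _]/(val (rootL t y)) -vproj_vtx.
rewrite (partition_big (fun t => vtx (rootL t y)) predT) //=.
under eq_bigr => b _ do rewrite fiber.
rewrite -big_mkcond /= sumrMnl -scaler_nat => /scalerI -> //.
by rewrite pnatr_eq0.
Qed.

Lemma sum_conj_vproj_orbit y t :
  \sum_(b | same_orbitb (vtx y) b) Lmat t *m vproj b *m adj (Lmat t) = 1%:M.
Proof. by rewrite -mulmx_suml -mulmx_sumr sum_vproj_orbit mulmx1 Lmat_unitaryV. Qed.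

(** * The magic unitary *)

Section QuantumPermutation.

Variables (w : vertex -> e8root) (Mc : vertex -> vertex -> tcode)
          (u : vertex -> vertex -> 'M[algC]_8).
Hypotheses (hw_in : forall a, same_orbit a (vtx (w a)))
           (hw_const : forall a b, same_orbit a b -> w a = w b)
           (hMc : forall a b, same_orbit a b -> Lmaps (Mc a b) a b)
           (hu_in : forall a b, same_orbit a b ->
              u a b = Lmat (Mc a b) *m Pproj (val (w a)) *m adj (Lmat (Mc a b)))
           (hu_out : forall a b, ~ same_orbit a b -> u a b = 0).

Lemma u_same_orbit a b : same_orbit a b -> u a b = Pproj (Lmat (Mc a b) *m val (w a)).
Proof. by move=> ab; rewrite hu_in // Pproj_unitary // Lmat_unitary. Qed.

Lemma u_projection a b : is_projection (u a b).
Proof.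
case: (same_orbitP a b) => ab; last first.
  by rewrite hu_out //; split; [apply/matrixP=> i j; rewrite !mxE conjC0 | rewrite mul0mx].
by rewrite u_same_orbit //; apply/Pproj_is_projection/root_neq0/Lmat_root/valP.
Qed.

Lemma u_row_sum a : \sum_b u a b = 1%:M.
Proof.
have [y ->] := vertex_rep a; have [t /Lmaps_vtx tyw] := hw_in (vtx y).
rewrite -(sum_conj_vproj_orbit y t) [LHS](bigID (same_orbitb (vtx y))) /=.
rewrite [X in _ + X]big1 ?addr0 => [|b /same_orbitP ab]; last exact: hu_out.
apply: eq_bigr => b; have [z ->] := vertex_rep b; move/same_orbitP => yz.
have /Lmaps_vtx Myz := hMc _ _ yz.
by rewrite u_same_orbit // (Pproj_Lmat_swap _ tyw) (Pproj_eq_pm Myz) vproj_vtx.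
Qed.

Lemma u_col_sum b : \sum_a u a b = 1%:M.
Proof.
have [z ->] := vertex_rep b; have [t /Lmaps_vtx tzw] := hw_in (vtx z).
rewrite -(sum_conj_vproj_orbit z t) [LHS](bigID (same_orbitb ^~ (vtx z))) /=.
rewrite [X in _ + X]big1 ?addr0 => [|a /same_orbitP ab]; last exact: hu_out.
rewrite (eq_bigl (same_orbitb (vtx z))) => [|a]; last first.
  by apply/same_orbitP/same_orbitP; apply: same_orbit_sym.
apply: eq_bigr => a; have [y ->] := vertex_rep a; move/same_orbitP/same_orbit_sym => yz.
have /Lmaps_vtx/Lmat_pm_sym Mzy := hMc _ _ yz.
by rewrite u_same_orbit // (hw_const _ _ yz) (Pproj_Lmat_swap _ tzw) (Pproj_eq_pm Mzy) vproj_vtx.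
Qed.

End QuantumPermutation.

Theorem lemma3p5
  (* w a = w_i where V_i is the L-orbit of a: one e8root per orbit *)
  (w : vertex -> e8root)
  (hw_in : forall a : vertex, same_orbit a (vtx (w a)))
  (hw_const : forall a b : vertex, same_orbit a b -> w a = w b)
  (* M_{yz}, chosen for every pair in a common orbit *)
  (Mc : vertex -> vertex -> (pauli * pauli * pauli)%type)
  (hMc : forall a b : vertex, same_orbit a b -> Lmaps (Mc a b) a b)
  (* the block-diagonal 120 x 120 matrix u *)
  (u : vertex -> vertex -> 'M[algC]_8)
  (hu_in : forall a b : vertex, same_orbit a b ->
     u a b = Lmat (Mc a b) *m Pproj (val (w a)) *m adj (Lmat (Mc a b)))
  (hu_out : forall a b : vertex, ~ same_orbit a b -> u a b = 0) :
  magic_unitary u.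
Proof.
split; first exact: u_projection hu_in hu_out.
split; first exact: u_row_sum hw_in hMc hu_in hu_out.
exact: u_col_sum hw_in hw_const hMc hu_in hu_out.
Qed.
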